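(* $\mathrm{GenSpec}\preceq F_{\mathrm{weak}}$: for all graphs $G,H$, if $F_{\mathrm{weak}}(G)=F_{\mathrm{weak}}(H)$ then $\mathrm{Spec}(G)=\mathrm{Spec}(H)$ and $\mathrm{Spec}(\overline G)=\mathrm{Spec}(\overline H)$, where $\overline G$ denotes the complement graph.
   Context: Graphs are finite, simple and undirected with adjacency matrix $A$. $\mathrm{Spec}(G)$ is the multiset of eigenvalues of $A$. Let $\mu_1<\dots<\mu_m$ be the distinct eigenvalues, $P_i$ the orthogonal projection matrix onto the eigenspace of $\mu_i$, $P_*(x,y)=(P_1(x,y),\dots,P_m(x,y))$. Fürer's weak spectral invariant is $F_{\mathrm{weak}}(G)=\big(\mathrm{Spec}(G),\{\!\{(P_*(x,x),\{\!\{P_*(x,y)\}\!\}_{y\in V(G)})\}\!\}_{x\in V(G)}\big)$, where $\{\!\{\cdot\}\!\}$ denotes a multiset. $\mathrm{GenSpec}(G)=(\mathrm{Spec}(G),\mathrm{Spec}(\overline G))$ (the generalized spectrum). *)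

From HB Require Import structures.
From mathcomp Require Import all_boot all_order all_algebra.
From mathcomp Require Import finmap multiset.
From mathcomp Require Import polyrcf.
From mathcomp Require Import reals.
From Stdlib Require Import ClassicalEpsilon.

Set Implicit Arguments.
Unset Strict Implicit.
Unset Printing Implicit Defensive.

Import Order.TTheory GRing.Theory Num.Theory.
Local Open Scope mset_scope.
Local Open Scope ring_scope.

Record graph := Graph {
  gV : finType;
  gadj : rel gV;
  gadj_sym : symmetric gadj;
  gadj_irr : irreflexive gadj }.

Definition compl_adj (G : graph) : rel (gV G) :=
  fun x y => (x != y) && ~~ gadj x y.

Lemma compl_adj_sym G : symmetric (@compl_adj G).
Proof. by move=> x y; rewrite /compl_adj eq_sym gadj_sym. Qed.

Lemma compl_adj_irr G : irreflexive (@compl_adj G).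
Proof. by move=> x; rewrite /compl_adj eqxx. Qed.

Definition compl (G : graph) : graph :=
  @Graph (gV G) (@compl_adj G) (@compl_adj_sym G) (@compl_adj_irr G).

Definition adjmx (R : realType) (G : graph) : 'M[R]_#|gV G| :=
  \matrix_(i, j) (gadj (enum_val i) (enum_val j))%:R.

Definition eigs (R : realType) n (A : 'M[R]_n) : seq R :=
  rootsR (char_poly A).   (* the distinct eigenvalues, increasing *)

Definition spec_mx (R : realType) n (A : 'M[R]_n) : {mset R} :=
  seq_mset (flatten [seq nseq (mup mu (char_poly A)) mu | mu <- eigs A]).

Definition Spec (R : realType) (G : graph) : {mset R} := spec_mx (adjmx R G).

Definition GenSpec (R : realType) (G : graph) : {mset R} * {mset R} :=
  (Spec R G, Spec R (compl G)).

Definition eigproj (R : realType) n (A : 'M[R]_n) (mu : R) : 'M[R]_n :=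
  epsilon (inhabits 0) (fun P : 'M[R]_n =>
    [/\ P *m P = P, P^T = P & (P == eigenspace A mu)%MS]).

Definition Pstar (R : realType) n (A : 'M[R]_n) (x y : 'I_n) : seq R :=
  [seq eigproj A mu x y | mu <- eigs A].

Definition Fweak_mx (R : realType) n (A : 'M[R]_n)
  : {mset R} * {mset (seq R * {mset (seq R)})} :=
  (spec_mx A,
   seq_mset [seq (Pstar A x x, seq_mset [seq Pstar A x y | y <- enum 'I_n])
            | x <- enum 'I_n]).

Definition Fweak (R : realType) (G : graph) := Fweak_mx (adjmx R G).

From mathcomp Require Import all_boot all_algebra.
From mathcomp Require Import finmap multiset polyrcf complex reals.
From mathcomp Require Import spectral.
From Stdlib Require Import ClassicalEpsilon.
From mathcomp Require Import ring lra.

(* The adjacency matrix of the complement is [J - 1 - A] with [J = u u^T] the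
   all-ones matrix. For real [x] beyond every eigenvalue, the matrix
   determinant lemma and the spectral decomposition [A = sum_mu mu P_mu] give
     det (x - (J - 1 - A))
       = det ((x + 1) + A) * (1 - sum_mu (x + 1 + mu)^-1 u^T P_mu u).
   The first factor depends only on Spec(A), and [u^T P_mu u] is the sum of
   all entries [P_mu(x, y)], which can be read off the multiset of rows of
   F_weak. Two polynomials agreeing on a half-line are equal. *)

Set Implicit Arguments.
Unset Strict Implicit.
Unset Printing Implicit Defensive.

Import GRing.Theory Num.Theory.
Local Open Scope ring_scope.

Section CharPoly.
Variable F : fieldType.

Lemma char_poly_similar n (P A : 'M[F]_n) : P \in unitmx ->
  char_poly (invmx P *m A *m P) = char_poly A.
Proof.
move=> Pu; rewrite /char_poly /char_poly_mx.
set iP := map_mx polyC (invmx P); set P' := map_mx polyC P.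
have iPP' : iP *m P' = 1%:M by rewrite -map_mxM mulVmx // map_mx1.
have P'iP : P' *m iP = 1%:M by rewrite -map_mxM mulmxV // map_mx1.
have XC : 'X%:M = iP *m 'X%:M *m P' :> 'M_n.
  by rewrite scalar_mxC -mulmxA iPP' mulmx1.
rewrite !map_mxM [in LHS]XC -mulmxBl -mulmxBr !det_mulmx mulrC mulrA.
by rewrite -det_mulmx P'iP det1 mul1r.
Qed.

Lemma horner_char_poly n (A : 'M[F]_n) x : (char_poly A).[x] = \det (x%:M - A).
Proof.
rewrite /char_poly -horner_evalE -det_map_mx; congr determinant.
apply/matrixP => i j; rewrite !mxE /= horner_evalE.
by rewrite hornerD hornerN hornerMn hornerX hornerC.
Qed.

Lemma split_Cayley_Hamilton n (A : 'M[F]_n) (rs : seq F) :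
  char_poly A = \prod_(r <- rs) ('X - r%:P) ->
  \big[mulmx/1%:M]_(r <- rs) (A - r%:M) = 0.
Proof.
case: n A => [|n] A splitA; first by rewrite flatmx0.
have := Cayley_Hamilton A; rewrite splitA rmorph_prod /= => <-.
by apply: eq_bigr => r _; rewrite rmorphB /= horner_mx_X horner_mx_C.
Qed.

End CharPoly.

Lemma det_1_sub_mul (R : comNzRingType) n (w : 'cV[R]_n) (v : 'rV[R]_n) :
  \det (1%:M - w *m v) = 1 - (v *m w) 0 0.
Proof.
have lower : block_mx 1%:M 0 w 1%:M *m block_mx 1%:M v 0 (1%:M - w *m v)
    = block_mx 1%:M v w 1%:M :> 'M[R]_(1 + n).
  by rewrite mulmx_block !(mul1mx, mul0mx, mulmx0, mulmx1, addr0, add0r) addrC subrK.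
have upper : block_mx (1%:M - v *m w) v 0 1%:M *m block_mx 1%:M 0 w 1%:M
    = block_mx 1%:M v w 1%:M :> 'M[R]_(1 + n).
  by rewrite mulmx_block !(mul1mx, mul0mx, mulmx0, mulmx1, addr0, add0r) subrK.
have := congr1 determinant (etrans lower (esym upper)).
rewrite !det_mulmx det_lblock !det_ublock !det1 !mul1r !mulr1 => ->.
by rewrite det_mx11 !mxE.
Qed.

Lemma mulmx_trmx_eq0 (R : realDomainType) n (w : 'rV[R]_n) :
  w *m w^T = 0 -> w = 0.
Proof.
move=> /matrixP /(_ 0 0); rewrite !mxE => wwT0.
have : \sum_j w 0 j ^+ 2 = 0.
  by rewrite -[RHS]wwT0; apply: eq_bigr => j _; rewrite [w^T _ _]mxE expr2.
move/psumr_eq0P => w2_0; apply/rowP => j; rewrite mxE.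
by apply/eqP; rewrite -sqrf_eq0 w2_0 // => i _; exact: sqr_ge0.
Qed.

(* For a basis [U] of [E], the projector is [U^T (U U^T)^-1 U]. *)
Lemma orthoproj_exists (R : realFieldType) n (E : 'M[R]_n) :
  exists P : 'M[R]_n, [/\ P *m P = P, P^T = P & (P == E)%MS].
Proof.
move: (row_base E) (row_base_free E) (eq_row_base E) => U Ufree Ueq.
set G := U *m U^T.
have Gu : G \in unitmx.
  rewrite -row_free_unit; apply: inj_row_free => v vG0.
  have : (v *m U) *m (v *m U)^T = 0.
    by rewrite trmx_mul mulmxA -(mulmxA v) vG0 mul0mx.
  move/mulmx_trmx_eq0 => vU0; apply: (row_free_inj Ufree).
  by rewrite vU0 mul0mx.
have GT : G^T = G by rewrite /G trmx_mul trmxK.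
exists (U^T *m invmx G *m U); split.
- by rewrite !mulmxA -(mulmxA (U^T *m invmx G) U) -/G mulmxK.
- by rewrite !trmx_mul trmxK trmx_inv GT mulmxA.
- apply/eqmxP; apply: eqmx_trans Ueq; apply/eqmxP/andP; split.
    exact: submxMl.
  have UP : U *m (U^T *m invmx G *m U) = U by rewrite !mulmxA -/G mulmxV // mul1mx.
  by rewrite -{1}UP submxMl.
Qed.

Lemma eq_poly_gt (R : numDomainType) (p q : {poly R}) (b : R) :
  (forall x, b < x -> p.[x] = q.[x]) -> p = q.
Proof.
move=> pq; apply/eqP; rewrite -subr_eq0; apply/negPn/negP => r0.
set r := p - q in r0.
suff : (size r < size r)%N by rewrite ltnn.
have := @max_poly_roots _ r [seq b + 1 + i%:R | i <- iota 0 (size r)] r0.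
rewrite size_map size_iota; apply.
- apply/allP => y /mapP [i _ ->]; rewrite /root /r hornerD hornerN pq ?subrr //.
  by rewrite -addrA ltrDl ltr_pwDl // ler0n.
- rewrite map_inj_uniq ?iota_uniq // => i j /addrI /eqP.
  by rewrite eqr_nat => /eqP.
Qed.

Section RealClosed.
Variable R : rcfType.

Lemma mem_rootsR (p : {poly R}) x : p != 0 -> (x \in rootsR p) = root p x.
Proof. by move=> p0; rewrite -(roots_on_rootsR p0 x) in_itv. Qed.

Lemma count_mem_rootsR_mup (p : {poly R}) y : p != 0 ->
  count_mem y (flatten [seq nseq (mup mu p) mu | mu <- rootsR p]) = mup y p.
Proof.
move=> p0; rewrite count_flatten sumnE !big_map.
under eq_bigr do rewrite count_nseq /=.
have [y_in|y_out] := boolP (y \in rootsR p).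
  rewrite (bigD1_seq y) ?uniq_roots //= eqxx mul1n big1_seq ?addn0 //.
  by move=> mu /andP[/negbTE ->].
rewrite big1_seq; last first.
  by move=> mu /= mu_in; case: eqP => // eq_y; rewrite -eq_y mu_in in y_out.
by rewrite mupNroot // -mem_rootsR.
Qed.

(* Pass to [R[i]], where the spectral theorem for hermitian matrices applies. *)
Lemma sym_char_poly_split n (A : 'M[R]_n) : A^T = A ->
  exists rs : seq R, char_poly A = \prod_(r <- rs) ('X - r%:P).
Proof.
move=> Asym; pose f := real_complex R; pose AC := map_mx f A.
have AC_herm : AC \is hermsymmx.
  apply: realsym_hermsym.
    by apply/is_hermitianmxP; rewrite expr0 scale1r /AC map_trmx Asym map_mx_id.
  by apply/mxOverP => i j; rewrite mxE; apply/complex_realP; exists (A i j).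
have d_real := hermitian_spectral_diag_real AC_herm.
have /orthomx_spectralP AC_diag := hermitian_normalmx AC_herm.
set d := spectral_diag AC in d_real AC_diag *.
have charAC : char_poly AC = \prod_(i < n) ('X - (d 0 i)%:P).
  rewrite [in LHS]AC_diag char_poly_similar ?spectral_unit //.
  rewrite char_poly_trig ?diag_mx_is_trig //.
  by apply: eq_bigr => i _; rewrite mxE eqxx mulr1n.
exists [seq complex.Re (d 0 i) | i <- enum 'I_n].
apply: (@map_poly_inj _ _ f).
rewrite map_char_poly -/AC charAC rmorph_prod big_map big_enum /=.
apply: eq_bigr => i _; rewrite map_polyXsubC /f.
by move/mxOverP: d_real => /(_ 0 i) /RRe_real {1}<-.
Qed.

End RealClosed.

Definition entry_sum (R : nmodType) n (M : 'M[R]_n) : R := \sum_i \sum_j M i j.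

Lemma entry_sum_quad (R : pzRingType) n (M : 'M[R]_n) :
  let u : 'cV[R]_n := const_mx 1 in (u^T *m (M *m u)) 0 0 = entry_sum M.
Proof.
rewrite /= !mxE; apply: eq_bigr => i _; rewrite !mxE mul1r.
by apply: eq_bigr => j _; rewrite !mxE mulr1.
Qed.

(* [opp_shift_poly (char_poly A) = char_poly (- 1 - A)], the polynomial
   [x |-> det ((x + 1) + A)]. *)
Definition opp_shift_poly (R : nzRingType) (p : {poly R}) : {poly R} :=
  (-1) ^+ (size p).-1 *: (p \Po (- 'X - 1)).

Definition compl_char_poly (R : idomainType) (p : {poly R}) (e : seq R) (s : R -> R) :=
  opp_shift_poly p - \sum_(mu <- e) s mu *: (opp_shift_poly p %/ ('X + (1 + mu)%:P)).

Lemma eigprojP (R : realType) n (A : 'M[R]_n) mu :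
  [/\ eigproj A mu *m eigproj A mu = eigproj A mu, (eigproj A mu)^T = eigproj A mu
    & (eigproj A mu == eigenspace A mu)%MS].
Proof. exact: epsilon_spec (orthoproj_exists (eigenspace A mu)).
Qed.

Lemma eigproj_id (R : realType) n (A : 'M[R]_n) m (v : 'M_(m, n)) mu :
  (v <= eigenspace A mu)%MS -> v *m eigproj A mu = v.
Proof.
have [idem _ /eqmxP eqE] := eigprojP A mu.
by rewrite -eqE => /submxP [D ->]; rewrite -mulmxA idem.
Qed.

Section SymmetricSpectral.
Variables (R : realType) (n : nat) (A : 'M[R]_n).
Hypothesis Asym : A^T = A.
Local Notation P := (eigproj A).

Lemma eigproj_mulA mu : P mu *m A = mu *: P mu.
Proof. by have [_ _ /andP[/eigenspaceP]] := eigprojP A mu. Qed.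

Lemma mulA_eigproj mu : A *m P mu = mu *: P mu.
Proof.
have [_ PT _] := eigprojP A mu.
by have := congr1 trmx (eigproj_mulA mu); rewrite trmx_mul PT Asym linearZ /= PT.
Qed.

Lemma eigproj_orth mu nu : mu != nu -> P mu *m P nu = 0.
Proof.
move=> mu_nu; have : (mu - nu) *: (P mu *m P nu) = 0.
  rewrite scalerBl scalemxAl -eigproj_mulA scalemxAr -mulA_eigproj mulmxA.
  exact: subrr.
by move/eqP; rewrite scaler_eq0 subr_eq0 (negbTE mu_nu) => /eqP.
Qed.

Lemma char_poly_split_eigs : exists rs : seq R,
  char_poly A = \prod_(r <- rs) ('X - r%:P) /\ {subset rs <= eigs A}.
Proof.
have [rs splitA] := sym_char_poly_split Asym; exists rs; split => // r r_in.
rewrite /eigs mem_rootsR ?splitA ?root_prod_XsubC //.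
by rewrite -splitA -size_poly_eq0 size_char_poly.
Qed.

(* By induction [w (A - r)] vanishes, so [w] lies in the eigenspace of [r]
   and [w = w P r = 0]. *)
Lemma row_eigproj_eq0 (w : 'rV[R]_n) (rs : seq R) :
  {subset rs <= eigs A} -> (forall nu, nu \in eigs A -> w *m P nu = 0) ->
  w *m \big[mulmx/1%:M]_(r <- rs) (A - r%:M) = 0 -> w = 0.
Proof.
elim: rs w => [|r rs IH] w rs_eigs wP0; first by rewrite big_nil mulmx1.
rewrite big_cons mulmxA => /IH wAr0.
have wr : w *m (A - r%:M) = 0.
  apply: wAr0 => [s s_in|nu nu_in]; first by apply: rs_eigs; rewrite inE s_in orbT.
  rewrite mulmxBr mulmxBl -mulmxA mulA_eigproj -scalemxAr wP0 // scaler0.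
  by rewrite mul_mx_scalar -scalemxAl wP0 // scaler0 subrr.
have /eigproj_id <- : (w <= eigenspace A r)%MS.
  by apply/eigenspaceP; move/eqP: wr; rewrite mulmxBr subr_eq0 mul_mx_scalar => /eqP.
by apply: wP0; apply: rs_eigs; exact: mem_head.
Qed.

Lemma sum_eigproj : \sum_(mu <- eigs A) P mu = 1%:M.
Proof.
have sumP nu : nu \in eigs A -> (\sum_(mu <- eigs A) P mu) *m P nu = P nu.
  move=> nu_in; rewrite mulmx_suml (bigD1_seq nu) ?uniq_roots //=.
  have [-> _ _] := eigprojP A nu.
  by rewrite big1_seq ?addr0 // => mu /andP[mu_nu _]; apply: eigproj_orth.
have [rs [splitA rs_eigs]] := char_poly_split_eigs.
apply/eqP; rewrite eq_sym -subr_eq0; apply/eqP/row_matrixP => i.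
rewrite row0; apply: (row_eigproj_eq0 rs_eigs).
- by move=> nu nu_in; rewrite -row_mul mulmxBl mul1mx sumP // subrr row0.
- by rewrite -row_mul (split_Cayley_Hamilton splitA) mulmx0 row0.
Qed.

Lemma eigproj_combM (f g : R -> R) :
  (\sum_(mu <- eigs A) f mu *: P mu) *m (\sum_(nu <- eigs A) g nu *: P nu)
  = \sum_(mu <- eigs A) (f mu * g mu) *: P mu.
Proof.
rewrite mulmx_suml; apply: eq_big_seq => mu mu_in.
rewrite mulmx_sumr (bigD1_seq mu) ?uniq_roots //= big1_seq ?addr0.
  by rewrite -scalemxAl -scalemxAr scalerA; have [-> _ _] := eigprojP A mu.
move=> nu /andP[nu_mu _]; rewrite -scalemxAl -scalemxAr eigproj_orth ?scaler0 //.
by rewrite eq_sym.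
Qed.

Lemma eigproj_comb_cst c : \sum_(mu <- eigs A) c *: P mu = c%:M.
Proof. by rewrite -scaler_sumr sum_eigproj scalemx1. Qed.

Lemma eigproj_comb_id : \sum_(mu <- eigs A) mu *: P mu = A.
Proof.
transitivity (A *m \sum_(mu <- eigs A) P mu); last by rewrite sum_eigproj mulmx1.
by rewrite mulmx_sumr; apply: eq_bigr => mu _; rewrite mulA_eigproj.
Qed.

Lemma char_poly_spec : char_poly A = \prod_(mu <- (spec_mx A : seq R)) ('X - mu%:P).
Proof.
have [rs [splitA _]] := char_poly_split_eigs.
have p0 : char_poly A != 0 by rewrite -size_poly_eq0 size_char_poly.
rewrite {1}splitA; apply: perm_big; rewrite /spec_mx perm_sym.
apply: perm_trans (perm_eq_seq_mset _) _; apply/allP => y _; apply/eqP.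
by rewrite count_mem_rootsR_mup // splitA mu_prod_XsubC.
Qed.

Lemma horner_char_poly_compl x : (forall mu, mu \in eigs A -> x + 1 + mu != 0) ->
  (char_poly (const_mx 1 - 1%:M - A)).[x] =
  (opp_shift_poly (char_poly A)).[x]
    * (1 - \sum_(mu <- eigs A) (x + 1 + mu)^-1 * entry_sum (P mu)).
Proof.
move=> x_reg; set u : 'cV[R]_n := const_mx 1.
have uuT : const_mx 1 = u *m u^T.
  by apply/matrixP => i j; rewrite !mxE big_ord1 !mxE mulr1.
set M := (x + 1)%:M + A.
have M_spec : \sum_(mu <- eigs A) (x + 1 + mu) *: P mu = M.
  under eq_bigr do rewrite scalerDl.
  by rewrite big_split /= eigproj_comb_cst eigproj_comb_id.
set N := \sum_(mu <- eigs A) (x + 1 + mu)^-1 *: P mu.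
have MN : M *m N = 1%:M.
  rewrite -M_spec eigproj_combM -(eigproj_comb_cst 1); apply: eq_big_seq => mu mu_in.
  by rewrite divff ?x_reg.
have factor : x%:M - (const_mx 1 - 1%:M - A) = M *m (1%:M - (N *m u) *m u^T).
  rewrite mulmxBr mulmx1 !mulmxA MN mul1mx -uuT /M.
  by apply/matrixP => i j; rewrite !mxE; case: (i == j); rewrite ?mulr1n ?mulr0n; ring.
rewrite horner_char_poly factor det_mulmx det_1_sub_mul; congr (_ * (1 - _)); last first.
  rewrite /N mulmx_suml mulmx_sumr summxE; apply: eq_bigr => mu _.
  by rewrite -scalemxAl -scalemxAr mxE entry_sum_quad.
have -> : M = (-1) *: ((- (x + 1))%:M - A).
  by rewrite scaleN1r opprB /M addrC raddfN opprK.
rewrite /opp_shift_poly size_char_poly /= detZ -horner_char_poly hornerZ horner_comp.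
by rewrite !hornerE opprD.
Qed.

Lemma char_poly_compl :
  char_poly (const_mx 1 - 1%:M - A)
  = compl_char_poly (char_poly A) (eigs A) (fun mu => entry_sum (P mu)).
Proof.
apply: (@eq_poly_gt _ _ _ (\sum_(mu <- eigs A) `|mu|)) => x x_gt.
have x_reg mu : mu \in eigs A -> x + 1 + mu != 0.
  move=> mu_in; apply: lt0r_neq0; have : `|mu| <= \sum_(mu <- eigs A) `|mu|.
    by rewrite (bigD1_seq mu) ?uniq_roots //= lerDl sumr_ge0.
  by have := ler_norm (- mu); rewrite normrN; lra.
rewrite horner_char_poly_compl // /compl_char_poly.
set p := char_poly A; set q := opp_shift_poly p.
rewrite hornerD hornerN horner_sum mulrBr mulr1 mulr_sumr.
congr (_ - _); apply: eq_big_seq => mu mu_in; rewrite [RHS]hornerZ.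
have p_mu : root p mu by rewrite -mem_rootsR // -size_poly_eq0 size_char_poly.
have root_q : ('X + (1 + mu)%:P) %| q.
  rewrite -[(1 + mu)%:P]opprK -polyCN dvdp_XsubCl /root /q /opp_shift_poly.
  by rewrite hornerZ horner_comp !hornerE opprK addrAC subrr add0r (eqP p_mu) mulr0.
rewrite -{1}(divpK root_q) hornerM hornerD hornerX hornerC addrA.
by rewrite mulrA mulfK ?x_reg // mulrC.
Qed.

End SymmetricSpectral.

Lemma eq_spec_mx (R : realType) n m (A : 'M[R]_n) (B : 'M[R]_m) :
  char_poly A = char_poly B -> spec_mx A = spec_mx B.
Proof. by rewrite /spec_mx /eigs => ->. Qed.

Lemma adjmx_sym (R : realType) (G : graph) : (adjmx R G)^T = adjmx R G.
Proof. by apply/matrixP => i j; rewrite !mxE gadj_sym. Qed.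

Lemma adjmx_compl (R : realType) (G : graph) :
  adjmx R (compl G) = const_mx 1 - 1%:M - adjmx R G.
Proof.
apply/matrixP => i j; rewrite !mxE /= /compl_adj (inj_eq enum_val_inj).
have [->|_] := eqVneq i j; first by rewrite gadj_irr mulr1n subrr sub0r oppr0.
by rewrite mulr0n subr0; case: gadj; rewrite ?subrr ?subr0.
Qed.

(* [W] stands for the second component of F_weak, whose elements are the
   pairs [(P_*(x, x), {{P_*(x, y)}}_y)]. *)
Definition coord_sum (R : realType) (W : multiset (seq R * multiset (seq R))%type) j : R :=
  \sum_(t <- (W : seq _)) \sum_(v <- enum_mset t.2) nth 0 v j.

Lemma coord_sum_Fweak (R : realType) n (A : 'M[R]_n) j :
  (j < size (eigs A))%N ->
  coord_sum (Fweak_mx A).2 j = entry_sum (eigproj A (nth 0 (eigs A) j)).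
Proof.
move=> j_lt; rewrite /coord_sum (perm_big _ (perm_eq_seq_mset _)) big_map big_enum.
apply: eq_bigr => x _; rewrite (perm_big _ (perm_eq_seq_mset _)) big_map big_enum.
by apply: eq_bigr => y _; rewrite (nth_map 0).
Qed.

Theorem theorem5p4 (R : realType) (G H : graph) :
  Fweak R G = Fweak R H ->
  Spec R G = Spec R H /\ Spec R (compl G) = Spec R (compl H).
Proof.
rewrite /Fweak /Spec !adjmx_compl.
set AG := adjmx R G; set AH := adjmx R H => Fweak_eq.
have spec_eq : spec_mx AG = spec_mx AH := congr1 fst Fweak_eq.
have [symG symH] : AG^T = AG /\ AH^T = AH by split; apply: adjmx_sym.
have char_eq : char_poly AG = char_poly AH.
  by rewrite (char_poly_spec symG) (char_poly_spec symH) spec_eq.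
have eigs_eq : eigs AG = eigs AH by rewrite /eigs char_eq.
have entry_sum_eq mu : mu \in eigs AG ->
    entry_sum (eigproj AG mu) = entry_sum (eigproj AH mu).
  move=> mu_in; have j_lt : (index mu (eigs AG) < size (eigs AG))%N by rewrite index_mem.
  rewrite -(nth_index 0 mu_in) -coord_sum_Fweak // (congr1 snd Fweak_eq).
  by rewrite coord_sum_Fweak eigs_eq // -eigs_eq.
split=> //; apply: eq_spec_mx; rewrite !char_poly_compl // char_eq -eigs_eq.
by congr (_ - _); apply: eq_big_seq => mu /entry_sum_eq ->.
Qed.
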